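(* Let $\varepsilon<\frac12$. There is no mechanism $M$ such that, for every collection of alternatives $A$, (i) the set of Nash equilibrium outcomes (pure or mixed) of $\Gamma_M(A)$ consists of exactly one point, and (ii) there exists a Nash equilibrium of $\Gamma_M(A)$ whose outcome is $\varepsilon$-Pareto efficient.
   Context: Two players bargain over a collection (multiset) $A=(a^k)_{k\in[n]}$ of alternatives $a^k\in[0,1]^2$, $a^k_i$ being player $i$'s utility. A mechanism $M=(M_n)_n$ specifies for each $n$ signal sets $\Sigma_1(n),\Sigma_2(n)$ and a map $f_n:\Sigma_1(n)\times\Sigma_2(n)\to\Delta([n])$. With risk-neutral players it induces a game $\Gamma_M(A)$ in which players choose (possibly mixed) signals and payoffs are expected utilities; the outcome of a profile is its expected utility vector. An outcome $x$ is $\varepsilon$-Pareto efficient if there is no $a\in A$ with $a_1>x_1+\varepsilon$ and $a_2>x_2+\varepsilon$. *)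

From Stdlib Require Import Reals List.
Open Scope R_scope.

Fixpoint sumR (n : nat) (g : nat -> R) : R :=
  match n with O => 0 | S m => sumR m g + g m end.

Definition is_dist (n : nat) (p : nat -> R) : Prop :=
  (forall k, (k < n)%nat -> 0 <= p k) /\ sumR n p = 1.

(* A collection A = (a^k)_{k<n} is given as a function nat -> R*R
   (only indices k < n matter); a^k = (fst (A k), snd (A k)). *)

(* A mechanism: for each n, signal sets Sig1 n, Sig2 n (arbitrary types)
   and f_n : Sig1 n * Sig2 n -> Delta([n]) (required for n >= 1;
   collections are nonempty). *)
Record mechanism := Mechanism {
  Sig1 : nat -> Type;
  Sig2 : nat -> Type;
  mech_f : forall n, Sig1 n -> Sig2 n -> nat -> R;
  mech_f_dist : forall n (s1 : Sig1 n) (s2 : Sig2 n),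
      (0 < n)%nat -> is_dist n (mech_f n s1 s2)
}.

(* Mixed strategies: finitely supported distributions, given as lists of
   (weight, signal) pairs. *)
Definition listsum {T : Type} (g : T -> R) (l : list T) : R :=
  fold_right (fun x acc => g x + acc) 0 l.

Definition is_mixed {S : Type} (m : list (R * S)) : Prop :=
  Forall (fun p => 0 <= fst p) m /\ listsum fst m = 1.

Definition pure_outcome (M : mechanism) (n : nat) (A : nat -> R * R)
  (s1 : Sig1 M n) (s2 : Sig2 M n) : R * R :=
  (sumR n (fun k => mech_f M n s1 s2 k * fst (A k)),
   sumR n (fun k => mech_f M n s1 s2 k * snd (A k))).

Definition outcome (M : mechanism) (n : nat) (A : nat -> R * R)
  (m1 : list (R * Sig1 M n)) (m2 : list (R * Sig2 M n)) : R * R :=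
  (listsum (fun p1 => listsum (fun p2 =>
      fst p1 * fst p2 * fst (pure_outcome M n A (snd p1) (snd p2))) m2) m1,
   listsum (fun p1 => listsum (fun p2 =>
      fst p1 * fst p2 * snd (pure_outcome M n A (snd p1) (snd p2))) m2) m1).

Definition nash (M : mechanism) (n : nat) (A : nat -> R * R)
  (m1 : list (R * Sig1 M n)) (m2 : list (R * Sig2 M n)) : Prop :=
  is_mixed m1 /\ is_mixed m2 /\
  (forall d1 : list (R * Sig1 M n), is_mixed d1 ->
     fst (outcome M n A d1 m2) <= fst (outcome M n A m1 m2)) /\
  (forall d2 : list (R * Sig2 M n), is_mixed d2 ->
     snd (outcome M n A m1 d2) <= snd (outcome M n A m1 m2)).

Definition eps_pareto (eps : R) (n : nat) (A : nat -> R * R) (x : R * R) : Prop :=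
  ~ (exists k, (k < n)%nat /\ fst (A k) > fst x + eps /\ snd (A k) > snd x + eps).

Definition valid_collection (n : nat) (A : nat -> R * R) : Prop :=
  (0 < n)%nat /\
  forall k, (k < n)%nat -> 0 <= fst (A k) <= 1 /\ 0 <= snd (A k) <= 1.

(** Give player 1 the alternatives (1,0) and (0,0): player 2 is then indifferent, so
    every equilibrium of the collection {(1,1),(0,0)} is also one of {(1,0),(0,0)},
    and uniqueness transports the near-efficient diagonal outcome of the former to the
    latter, giving player 1 at least 1 - eps there.  Symmetrically player 2 gets at
    least 1 - eps from {(0,0),(0,1)}.  An equilibrium of {(1,0),(0,1)} is an equilibrium
    of both one-sided collections, so its outcome pays at least 1 - eps to each player;
    but the payoffs of that collection always sum to 1, and 2 (1 - eps) > 1. *)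

From Stdlib Require Import Reals List Lra.
Open Scope R_scope.

Lemma sumR_ext n (g h : nat -> R) :
  (forall k, (k < n)%nat -> g k = h k) -> sumR n g = sumR n h.
Proof.
  induction n as [|n IH]; intros Hgh; simpl; [reflexivity|].
  rewrite IH, Hgh by auto; reflexivity.
Qed.

Lemma sumR_plus n (g h : nat -> R) :
  sumR n (fun k => g k + h k) = sumR n g + sumR n h.
Proof. induction n as [|n IH]; simpl; [lra|]. rewrite IH; lra. Qed.

Lemma sumR_zero n : sumR n (fun _ => 0) = 0.
Proof. induction n as [|n IH]; simpl; [reflexivity|]. rewrite IH; lra. Qed.

Lemma listsum_ext {T : Type} (g h : T -> R) l :
  (forall x, g x = h x) -> listsum g l = listsum h l.
Proof. intros Hgh; induction l as [|x l IH]; simpl; [reflexivity|]. rewrite IH, Hgh; reflexivity. Qed.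

Lemma listsum_plus {T : Type} (g h : T -> R) l :
  listsum (fun x => g x + h x) l = listsum g l + listsum h l.
Proof. induction l as [|x l IH]; simpl; [lra|]. rewrite IH; lra. Qed.

Lemma listsum_scal {T : Type} c (g : T -> R) l :
  listsum (fun x => c * g x) l = c * listsum g l.
Proof. induction l as [|x l IH]; simpl; [lra|]. rewrite IH; lra. Qed.

Definition expect {S1 S2 : Type} (m1 : list (R * S1)) (m2 : list (R * S2))
  (u : S1 -> S2 -> R) : R :=
  listsum (fun p1 => listsum (fun p2 => fst p1 * fst p2 * u (snd p1) (snd p2)) m2) m1.

Section Expectation.

Variables (S1 S2 : Type) (m1 : list (R * S1)) (m2 : list (R * S2)).

Lemma expect_ext (u v : S1 -> S2 -> R) :
  (forall s1 s2, u s1 s2 = v s1 s2) -> expect m1 m2 u = expect m1 m2 v.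
Proof.
  intros Huv; apply listsum_ext; intros p1; apply listsum_ext; intros p2.
  rewrite Huv; reflexivity.
Qed.

Lemma expect_plus (u v : S1 -> S2 -> R) :
  expect m1 m2 (fun s1 s2 => u s1 s2 + v s1 s2) = expect m1 m2 u + expect m1 m2 v.
Proof.
  unfold expect; rewrite <- listsum_plus; apply listsum_ext; intros p1.
  rewrite <- listsum_plus; apply listsum_ext; intros p2; ring.
Qed.

Lemma expect_zero : expect m1 m2 (fun _ _ => 0) = 0.
Proof.
  unfold expect; rewrite (listsum_ext _ (fun p1 => 0 * listsum fst m2)).
  - rewrite listsum_scal; ring.
  - intros p1; rewrite <- listsum_scal; apply listsum_ext; intros p2; ring.
Qed.

Lemma expect_one : is_mixed m1 -> is_mixed m2 -> expect m1 m2 (fun _ _ => 1) = 1.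
Proof.
  intros [_ Hm1] [_ Hm2]; unfold expect.
  transitivity (listsum (fun p1 => fst p1 * listsum fst m2) m1).
  - apply listsum_ext; intros p1; rewrite <- listsum_scal; apply listsum_ext; intros p2; ring.
  - rewrite Hm2; etransitivity; [|exact Hm1]; apply listsum_ext; intros p1; ring.
Qed.

End Expectation.

Section Outcomes.

Variables (M : mechanism) (n : nat).

Lemma outcome_fst A m1 m2 :
  fst (outcome M n A m1 m2) = expect m1 m2 (fun s1 s2 => fst (pure_outcome M n A s1 s2)).
Proof. reflexivity. Qed.

Lemma outcome_snd A m1 m2 :
  snd (outcome M n A m1 m2) = expect m1 m2 (fun s1 s2 => snd (pure_outcome M n A s1 s2)).
Proof. reflexivity. Qed.

Lemma outcome_fst_ext A B m1 m2 :
  (forall k, (k < n)%nat -> fst (A k) = fst (B k)) ->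
  fst (outcome M n A m1 m2) = fst (outcome M n B m1 m2).
Proof.
  intros HAB; rewrite !outcome_fst; apply expect_ext; intros s1 s2.
  apply sumR_ext; intros k Hk; rewrite HAB by exact Hk; reflexivity.
Qed.

Lemma outcome_snd_ext A B m1 m2 :
  (forall k, (k < n)%nat -> snd (A k) = snd (B k)) ->
  snd (outcome M n A m1 m2) = snd (outcome M n B m1 m2).
Proof.
  intros HAB; rewrite !outcome_snd; apply expect_ext; intros s1 s2.
  apply sumR_ext; intros k Hk; rewrite HAB by exact Hk; reflexivity.
Qed.

Lemma outcome_fst_zero A m1 m2 :
  (forall k, (k < n)%nat -> fst (A k) = 0) -> fst (outcome M n A m1 m2) = 0.
Proof.
  intros HA; rewrite outcome_fst, <- (expect_zero _ _ m1 m2); apply expect_ext; intros s1 s2.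
  rewrite <- (sumR_zero n); apply sumR_ext; intros k Hk; rewrite HA by exact Hk; ring.
Qed.

Lemma outcome_snd_zero A m1 m2 :
  (forall k, (k < n)%nat -> snd (A k) = 0) -> snd (outcome M n A m1 m2) = 0.
Proof.
  intros HA; rewrite outcome_snd, <- (expect_zero _ _ m1 m2); apply expect_ext; intros s1 s2.
  rewrite <- (sumR_zero n); apply sumR_ext; intros k Hk; rewrite HA by exact Hk; ring.
Qed.

Lemma outcome_diag A m1 m2 :
  (forall k, (k < n)%nat -> fst (A k) = snd (A k)) ->
  fst (outcome M n A m1 m2) = snd (outcome M n A m1 m2).
Proof.
  intros HA; rewrite outcome_fst, outcome_snd; apply expect_ext; intros s1 s2.
  apply sumR_ext; intros k Hk; rewrite HA by exact Hk; reflexivity.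
Qed.

Lemma pure_outcome_sum_one A s1 s2 : (0 < n)%nat ->
  (forall k, (k < n)%nat -> fst (A k) + snd (A k) = 1) ->
  fst (pure_outcome M n A s1 s2) + snd (pure_outcome M n A s1 s2) = 1.
Proof.
  intros Hn HA; simpl; rewrite <- sumR_plus.
  destruct (mech_f_dist M n s1 s2 Hn) as [_ Hdist]; rewrite <- Hdist.
  apply sumR_ext; intros k Hk.
  rewrite <- Rmult_plus_distr_l, HA by exact Hk; ring.
Qed.

Lemma outcome_sum_one A m1 m2 : (0 < n)%nat ->
  (forall k, (k < n)%nat -> fst (A k) + snd (A k) = 1) ->
  is_mixed m1 -> is_mixed m2 ->
  fst (outcome M n A m1 m2) + snd (outcome M n A m1 m2) = 1.
Proof.
  intros Hn HA Hm1 Hm2.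
  rewrite outcome_fst, outcome_snd, <- expect_plus, <- (expect_one _ _ m1 m2 Hm1 Hm2).
  apply expect_ext; intros s1 s2; exact (pure_outcome_sum_one A s1 s2 Hn HA).
Qed.

Lemma nash_snd_indifferent A B m1 m2 :
  (forall k, (k < n)%nat -> fst (B k) = fst (A k) /\ snd (B k) = 0) ->
  nash M n A m1 m2 -> nash M n B m1 m2.
Proof.
  intros HB [Hm1 [Hm2 [Hbr1 _]]].
  split; [exact Hm1|split; [exact Hm2|split]].
  - intros d1 Hd1; rewrite !(outcome_fst_ext B A) by (intros k Hk; apply HB, Hk).
    exact (Hbr1 d1 Hd1).
  - intros d2 _; rewrite !outcome_snd_zero by (intros k Hk; apply HB, Hk); lra.
Qed.

Lemma nash_fst_indifferent A B m1 m2 :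
  (forall k, (k < n)%nat -> fst (B k) = 0 /\ snd (B k) = snd (A k)) ->
  nash M n A m1 m2 -> nash M n B m1 m2.
Proof.
  intros HB [Hm1 [Hm2 [_ Hbr2]]].
  split; [exact Hm1|split; [exact Hm2|split]].
  - intros d1 _; rewrite !outcome_fst_zero by (intros k Hk; apply HB, Hk); lra.
  - intros d2 Hd2; rewrite !(outcome_snd_ext B A) by (intros k Hk; apply HB, Hk).
    exact (Hbr2 d2 Hd2).
Qed.

End Outcomes.

Lemma eps_pareto_diag_ge eps n A x k :
  eps_pareto eps n A x -> (k < n)%nat -> A k = (1, 1) -> fst x = snd x ->
  1 - eps <= fst x.
Proof.
  intros Hpar Hk HAk Hx; destruct (Rle_or_lt (1 - eps) (fst x)) as [Hge|Hlt]; [exact Hge|].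
  exfalso; apply Hpar; exists k; rewrite HAk; simpl; split; [exact Hk|lra].
Qed.

Definition coll2 (a b : R * R) : nat -> R * R :=
  fun k => match k with O => a | S _ => b end.

Lemma valid_coll2 a b :
  0 <= fst a <= 1 -> 0 <= snd a <= 1 -> 0 <= fst b <= 1 -> 0 <= snd b <= 1 ->
  valid_collection 2 (coll2 a b).
Proof. intros; split; [auto|]; intros [|k] _; simpl; auto. Qed.

Section NoMechanism.

Variables (eps : R) (M : mechanism).

Hypothesis unique_efficient : forall (n : nat) (A : nat -> R * R), valid_collection n A ->
  (exists x : R * R,
     (exists m1 m2, nash M n A m1 m2 /\ outcome M n A m1 m2 = x) /\
     (forall m1 m2, nash M n A m1 m2 -> outcome M n A m1 m2 = x)) /\
  (exists m1 m2, nash M n A m1 m2 /\ eps_pareto eps n A (outcome M n A m1 m2)).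

Lemma nash_outcome_unique n A m1 m2 m1' m2' : valid_collection n A ->
  nash M n A m1 m2 -> nash M n A m1' m2' -> outcome M n A m1 m2 = outcome M n A m1' m2'.
Proof.
  intros HA Hne Hne'; destruct (unique_efficient n A HA) as [[x [_ Hx]] _].
  rewrite (Hx _ _ Hne), (Hx _ _ Hne'); reflexivity.
Qed.

Lemma player1_payoff_ge m1 m2 :
  nash M 2 (coll2 (1, 0) (0, 0)) m1 m2 ->
  1 - eps <= fst (outcome M 2 (coll2 (1, 0) (0, 0)) m1 m2).
Proof.
  intros Hne.
  assert (HB : valid_collection 2 (coll2 (1, 0) (0, 0))) by (apply valid_coll2; simpl; lra).
  set (A := coll2 (1, 1) (0, 0)).
  assert (HA : valid_collection 2 A) by (apply valid_coll2; simpl; lra).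
  destruct (unique_efficient 2 A HA) as [_ [a1 [a2 [Hne_a Hpar]]]].
  assert (Hne_a' : nash M 2 (coll2 (1, 0) (0, 0)) a1 a2).
  { apply (nash_snd_indifferent M 2 A); [intros [|k] _; simpl; auto|exact Hne_a]. }
  rewrite (nash_outcome_unique _ _ _ _ _ _ HB Hne Hne_a').
  rewrite (outcome_fst_ext M 2 _ A) by (intros [|k] _; reflexivity).
  apply (eps_pareto_diag_ge _ _ _ _ 0 Hpar); [auto|reflexivity|].
  apply outcome_diag; intros [|k] _; reflexivity.
Qed.

Lemma player2_payoff_ge m1 m2 :
  nash M 2 (coll2 (0, 0) (0, 1)) m1 m2 ->
  1 - eps <= snd (outcome M 2 (coll2 (0, 0) (0, 1)) m1 m2).
Proof.
  intros Hne.
  assert (HB : valid_collection 2 (coll2 (0, 0) (0, 1))) by (apply valid_coll2; simpl; lra).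
  set (A := coll2 (0, 0) (1, 1)).
  assert (HA : valid_collection 2 A) by (apply valid_coll2; simpl; lra).
  destruct (unique_efficient 2 A HA) as [_ [a1 [a2 [Hne_a Hpar]]]].
  assert (Hne_a' : nash M 2 (coll2 (0, 0) (0, 1)) a1 a2).
  { apply (nash_fst_indifferent M 2 A); [intros [|k] _; simpl; auto|exact Hne_a]. }
  rewrite (nash_outcome_unique _ _ _ _ _ _ HB Hne Hne_a').
  rewrite (outcome_snd_ext M 2 _ A) by (intros [|k] _; reflexivity).
  rewrite <- outcome_diag by (intros [|k] _; reflexivity).
  apply (eps_pareto_diag_ge _ _ _ _ 1 Hpar); [auto|reflexivity|].
  apply outcome_diag; intros [|k] _; reflexivity.
Qed.

Lemma unique_efficient_eps_ge_half : 1 / 2 <= eps.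
Proof.
  set (A := coll2 (1, 0) (0, 1)).
  assert (HA : valid_collection 2 A) by (apply valid_coll2; simpl; lra).
  destruct (unique_efficient 2 A HA) as [[_ [[m1 [m2 [Hne _]]] _]] _].
  assert (H1 : 1 - eps <= fst (outcome M 2 (coll2 (1, 0) (0, 0)) m1 m2)).
  { apply player1_payoff_ge, (nash_snd_indifferent M 2 A); [intros [|k] _; simpl; auto|exact Hne]. }
  assert (H2 : 1 - eps <= snd (outcome M 2 (coll2 (0, 0) (0, 1)) m1 m2)).
  { apply player2_payoff_ge, (nash_fst_indifferent M 2 A); [intros [|k] _; simpl; auto|exact Hne]. }
  rewrite (outcome_fst_ext M 2 _ A) in H1 by (intros [|k] _; reflexivity).
  rewrite (outcome_snd_ext M 2 _ A) in H2 by (intros [|k] _; reflexivity).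
  destruct Hne as [Hm1 [Hm2 _]].
  assert (Hsum : fst (outcome M 2 A m1 m2) + snd (outcome M 2 A m1 m2) = 1).
  { apply outcome_sum_one; [auto|intros [|k] _; simpl; lra|exact Hm1|exact Hm2]. }
  lra.
Qed.

End NoMechanism.

Theorem theorem2 : forall eps : R, eps < 1 / 2 ->
  ~ (exists M : mechanism,
       forall (n : nat) (A : nat -> R * R), valid_collection n A ->
         (exists x : R * R,
            (exists m1 m2, nash M n A m1 m2 /\ outcome M n A m1 m2 = x) /\
            (forall m1 m2, nash M n A m1 m2 -> outcome M n A m1 m2 = x)) /\
         (exists m1 m2, nash M n A m1 m2 /\
            eps_pareto eps n A (outcome M n A m1 m2))).
Proof.
  intros eps Heps [M HM].
  pose proof (unique_efficient_eps_ge_half eps M HM).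
  lra.
Qed.
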